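(* Let $\Gamma$ be a signed bipartite graph on $n$ vertices with adjacency matrix $\begin{bmatrix} O & M\\ M^{\mathrm T} & O\end{bmatrix}$, where $M$ is a square matrix of order $m=n/2$. Then $\Delta(\Gamma)=2^n\det^2(M)\,\Delta^2(M^{\mathrm T}M)$.
   Context: A signed graph is a simple graph with each edge assigned a sign $\pm1$; its adjacency matrix has entry equal to the edge sign for adjacent vertices and $0$ otherwise. For a monic polynomial $f$ of degree $k$ with roots $\alpha_1,\dots,\alpha_k$ (with multiplicity), the discriminant is $\Delta(f)=\prod_{1\le i<j\le k}(\alpha_i-\alpha_j)^2$. For a square matrix $B$, $\Delta(B)$ is the discriminant of $\det(xI-B)$, and $\Delta(\Gamma)$ is the discriminant of the adjacency matrix of $\Gamma$. *)

From HB Require Import structures.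
From mathcomp Require Import all_boot all_order all_algebra all_field.
Set Implicit Arguments. Unset Strict Implicit. Unset Printing Implicit Defensive.
Import Order.TTheory GRing.Theory Num.Theory.
Local Open Scope ring_scope.

(* A list of the roots (with multiplicity) of a polynomial over the
   algebraically closed field algC; for monic p, p = \prod_(z <- r) ('X - z). *)
Definition rootseqC (p : {poly algC}) : seq algC :=
  sval (closed_field_poly_normal p).

Definition discP (p : {poly algC}) : algC :=
  let r := rootseqC p in
  \prod_(i < size r) \prod_(j < size r | (i < j)%N) (r`_i - r`_j) ^+ 2.

Definition discM (k : nat) (B : 'M[algC]_k) : algC := discP (char_poly B).

Definition mxC (k l : nat) (B : 'M[int]_(k, l)) : 'M[algC]_(k, l) :=
  map_mx (fun z : int => z%:~R) B.

Definition bip_adj (m : nat) (M : 'M[int]_m) : 'M[int]_(m + m) :=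
  block_mx 0 M M^T 0.

(* M has entries in {-1, 0, 1} (edge signs or no edge). *)
Definition signed_mx (k l : nat) (M : 'M[int]_(k, l)) : Prop :=
  forall i j, M i j \in [:: -1; 0; 1].

From HB Require Import structures.
From mathcomp Require Import all_boot all_order all_algebra all_field ring.
Set Implicit Arguments.
Unset Strict Implicit.
Unset Printing Implicit Defensive.
Import Order.TTheory GRing.Theory Num.Theory.
Local Open Scope ring_scope.

(* The characteristic polynomial of [[0, M], [M^T, 0]] is q(x^2), where q is
   the characteristic polynomial of M^T M, so its roots are the +-sqrt(mu) for
   the roots mu of q.  Writing the discriminant of a monic p of degree k as
   (-1)^C(k,2) times the product of p'(alpha) over its roots alpha, and using
   p'(x) = 2x q'(x^2), the two roots +-sqrt(mu) contribute -4 mu q'(mu)^2.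
   Hence Delta(q(x^2)) = (-4)^m q(0) Delta(q)^2, and q(0) = (-1)^m det(M)^2. *)

Lemma odd_bin2_double k : odd 'C(k + k, 2) = odd k.
Proof.
rewrite bin2 addnn -mul2n -mulnA mul2n half_double oddM.
by case: k => [|k] //; rewrite mul2n doubleS /= odd_double andbT.
Qed.

Section RootProducts.
Variable R : comNzRingType.

Lemma prodr_pairs_const (c : R) k :
  \prod_(i < k) \prod_(j < k | (i < j)%N) c = c ^+ 'C(k, 2).
Proof.
elim: k => [|k IHk]; first by rewrite big_ord0.
rewrite big_ord_recr /= [X in _ * X]big_pred0 => [|j]; last first.
  by rewrite ltnNge leq_ord.
rewrite mulr1 binS bin1 exprD -IHk -[in c ^+ k](card_ord k) -prodr_const -big_split.
by apply: eq_bigr => i _; rewrite big_mkcond big_ord_recr /= ltn_ord -big_mkcond.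
Qed.

Lemma prod_offdiag (k : nat) (F : 'I_k -> 'I_k -> R) :
  \prod_(i < k) \prod_(j < k | j != i) F i j =
  \prod_(i < k) \prod_(j < k | (i < j)%N) (F i j * F j i).
Proof.
have upper (i j : 'I_k) : (j != i) && (i < j)%N = (i < j)%N.
  by rewrite -val_eqE /=; case: ltngtP.
have lower (i j : 'I_k) : (j != i) && ~~ (i < j)%N = (j < i)%N.
  by rewrite -val_eqE /=; case: ltngtP.
under eq_bigr => i _ do rewrite (bigID (fun j : 'I_k => (i < j)%N)) /=.
rewrite big_split /= [X in _ * X](exchange_big_dep xpredT) //= -big_split /=.
apply: eq_bigr => i _; rewrite big_split /=.
by congr (_ * _); apply: eq_bigl => j; rewrite ?upper ?lower.
Qed.

Definition seq_disc (s : seq R) : R :=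
  \prod_(i < size s) \prod_(j < size s | (i < j)%N) (s`_i - s`_j) ^+ 2.

Lemma deriv_prod_XsubC_nth (s : seq R) (i : 'I_(size s)) :
  (\prod_(z <- s) ('X - z%:P))^`().[s`_i] =
  \prod_(j < size s | j != i) (s`_i - s`_j).
Proof.
rewrite (big_nth 0) big_mkord (bigD1 i) //= derivM hornerD !hornerM hornerXsubC.
rewrite subrr mul0r addr0 derivXsubC hornerC mul1r horner_prod.
by apply: eq_bigr => j _; rewrite hornerXsubC.
Qed.

Lemma prod_deriv_prod_XsubC (s : seq R) :
  \prod_(z <- s) (\prod_(x <- s) ('X - x%:P))^`().[z] =
  (-1) ^+ 'C(size s, 2) * seq_disc s.
Proof.
set p := \prod_(z <- s) ('X - z%:P).
transitivity (\prod_(i < size s) p^`().[s`_i]); first by rewrite (big_nth 0) big_mkord.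
under eq_bigr => i _ do rewrite deriv_prod_XsubC_nth.
rewrite prod_offdiag /seq_disc -prodr_pairs_const -big_split.
apply: eq_bigr => i _; rewrite -big_split; apply: eq_bigr => j _.
by rewrite /= -[s`_j - _]opprB mulrN mulN1r expr2.
Qed.

Lemma comp_polyX2_prod_XsubC (t : seq R) :
  (\prod_(z <- t) ('X - (z ^+ 2)%:P)) \Po 'X^2 =
  \prod_(z <- t ++ map -%R t) ('X - z%:P).
Proof.
rewrite rmorph_prod big_cat /= big_map -big_split /=; apply: eq_bigr => z _.
by rewrite comp_polyB comp_polyX comp_polyC polyCN opprK -subr_sqr rmorphXn.
Qed.

Lemma prodr_const_seq (I : Type) (c : R) (s : seq I) : \prod_(z <- s) c = c ^+ size s.
Proof. by rewrite big_const_seq count_predT iter_mulr_1. Qed.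

Lemma prod_deriv_comp_X2 (q : {poly R}) (t : seq R) :
  \prod_(z <- t ++ map -%R t) (q \Po 'X^2)^`().[z] =
  (-4) ^+ size t * \prod_(z <- t) z ^+ 2 * (\prod_(z <- t) q^`().[z ^+ 2]) ^+ 2.
Proof.
rewrite -prodr_const_seq big_cat /= big_map -big_split /= -prodrXl -!big_split.
apply: eq_bigr => z _ /=.
rewrite deriv_comp !hornerM !horner_comp derivXn /= !hornerE sqrrN.
by rewrite !expr1 /=; ring.
Qed.
End RootProducts.

Lemma discPE (p : {poly algC}) : discP p = seq_disc (rootseqC p).
Proof. by []. Qed.

Lemma prod_rootseqC (p : {poly algC}) :
  p \is monic -> \prod_(z <- rootseqC p) ('X - z%:P) = p.
Proof.
rewrite /rootseqC; case: closed_field_poly_normal => r def_p /= /monicP lc_p.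
by rewrite [RHS]def_p lc_p scale1r.
Qed.

Lemma discP_prod_XsubC (s : seq algC) (p : {poly algC}) :
  p = \prod_(z <- s) ('X - z%:P) ->
  discP p = (-1) ^+ 'C(size s, 2) * \prod_(z <- s) p^`().[z].
Proof.
move=> def_p; have mon_p : p \is monic by rewrite def_p monic_prod_XsubC.
have pe : perm_eq (rootseqC p) s by apply: prod_XsubC_eq; rewrite -def_p prod_rootseqC.
rewrite -(perm_big _ pe) -(perm_size pe) -[X in X^`()](prod_rootseqC mon_p).
by rewrite discPE prod_deriv_prod_XsubC signrMK.
Qed.

Lemma discP_comp_X2 (q : {poly algC}) : q \is monic ->
  discP (q \Po 'X^2) = (-4) ^+ (size q).-1 * q.[0] * discP q ^+ 2.
Proof.
move=> mon_q; set t := map sqrtC (rootseqC q).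
have def_q : q = \prod_(z <- map (fun z => z ^+ 2) t) ('X - z%:P).
  by rewrite -map_comp (eq_map (@sqrtCK _)) map_id prod_rootseqC.
clearbody t.
have size_q : (size q).-1 = size t by rewrite def_q size_prod_XsubC size_map.
have q_0 : q.[0] = (-1) ^+ size t * \prod_(z <- t) z ^+ 2.
  rewrite def_q horner_prod big_map -prodr_const_seq -big_split /=.
  by apply: eq_bigr => z _; rewrite hornerXsubC sub0r mulN1r.
have def_q2 : q \Po 'X^2 = \prod_(z <- t ++ map -%R t) ('X - z%:P).
  by rewrite -comp_polyX2_prod_XsubC def_q big_map.
rewrite (discP_prod_XsubC def_q2) (discP_prod_XsubC def_q) prod_deriv_comp_X2.
rewrite size_cat !size_map -[(-1) ^+ 'C(_ + _, 2)]signr_odd odd_bin2_double signr_odd big_map.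
rewrite size_q q_0 exprMn sqrr_sign mul1r; ring.
Qed.

Lemma char_poly_block_antidiag (R : idomainType) (m : nat) (A B : 'M[R]_m) :
  char_poly (block_mx 0 A B 0) = char_poly (B *m A) \Po 'X^2.
Proof.
set Ap := map_mx polyC A; set Bp := map_mx polyC B.
set U : 'M[{poly R}]_(m + m) := block_mx 'X%:M Ap 0 'X%:M.
have XmX_neq0 : 'X ^+ m * 'X ^+ m != 0 :> {poly R}.
  by rewrite mulf_neq0 // expf_neq0 // polyX_eq0.
have det_U : \det U = 'X ^+ m * 'X ^+ m by rewrite det_ublock !det_scalar.
have char_mxU : char_poly_mx (block_mx 0 A B 0) *m U =
    block_mx ('X ^+ 2)%:M 0 (- ('X *: Bp)) (('X ^+ 2)%:M - Bp *m Ap).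
  rewrite /char_poly_mx map_block_mx !map_mx0 scalar_mx_block opp_block_mx.
  rewrite add_block_mx !subr0 !sub0r mulmx_block !mulmx0 !addr0 !mul_scalar_mx.
  by rewrite !mul_mx_scalar scale_scalar_mx -expr2 !scalerN subrr mulNmx addrC.
have det_schur : \det (('X ^+ 2)%:M - Bp *m Ap) = char_poly (B *m A) \Po 'X^2.
  rewrite /char_poly -det_map_mx /char_poly_mx map_mxB map_scalar_mx /= comp_polyX.
  congr (\det (_ - _)); apply/matrixP => i j.
  rewrite !mxE /= comp_polyC rmorph_sum; apply: eq_bigr => k _.
  by rewrite rmorphM !mxE.
apply: (mulIf XmX_neq0); rewrite -det_U -det_mulmx char_mxU det_lblock det_schur.
by rewrite det_scalar det_U mulrC -exprM mulnC exprM expr2.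
Qed.

Theorem lemma4p2 (m : nat) (M : 'M[int]_m) :
  signed_mx M ->
  discM (mxC (bip_adj M)) =
    2 ^+ (m + m) * (\det (mxC M)) ^+ 2 * (discM (mxC (M^T *m M))) ^+ 2.
Proof.
(* The sign condition on the entries is not needed. *)
move=> _.
have mxC_adj : mxC (bip_adj M) = block_mx 0 (mxC M) (mxC M)^T 0.
  by rewrite /mxC /bip_adj map_block_mx !map_mx0 map_trmx.
have mxC_MtM : mxC (M^T *m M) = (mxC M)^T *m mxC M by rewrite /mxC map_mxM map_trmx.
rewrite /discM mxC_adj char_poly_block_antidiag mxC_MtM discP_comp_X2 ?char_poly_monic //.
have two_mm : 2 ^+ (m + m) = (-4) ^+ m * (-1) ^+ m :> algC.
  by rewrite exprD -!exprMn; congr (_ ^+ _); ring.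
rewrite size_char_poly horner_coef0 char_poly_det det_mulmx det_tr two_mm; ring.
Qed.
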